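(* The plactic monoid $\mathcal P_3$ of rank $3$ satisfies every semigroup identity satisfied by the monoid $\mathrm{TMat}_3(\mathbb T)$ of $3\times3$ upper triangular tropical matrices. In particular, with $\widetilde w=yx^2y^2x$, $\mathcal P_3$ satisfies $\widetilde w\,x\,\widetilde w=\widetilde w\,y\,\widetilde w$ upon substituting $x=uv$ and $y=vu$ for arbitrary $u,v\in\mathcal P_3$.
   Context: $\mathcal P_3=\mathcal A_3^*/{\equiv_{\mathrm{knu}}}$ with $\mathcal A_3=\{a_1<a_2<a_3\}$ and $\equiv_{\mathrm{knu}}$ the congruence generated by $xzy=zxy$ ($x\le y<z$), $yxz=yzx$ ($x<y\le z$). $\mathrm{TMat}_3(\mathbb T)$: upper triangular $3\times 3$ matrices over $\mathbb T=\mathbb R\cup\{-\infty\}$ with max-plus product $(X\odot Y)_{i,j}=\max_t(x_{i,t}+y_{t,j})$. A semigroup identity is a formal equality $u=v$ of two distinct nonempty words in variables; $S$ satisfies it if $\varphi(u)=\varphi(v)$ for every homomorphism $\varphi$ from the free semigroup on the variables into $S$. (It is known from prior work that $\mathrm{TMat}_3(\mathbb T)$ satisfies $\widetilde w\,(AB)\,\widetilde w=\widetilde w\,(BA)\,\widetilde w$ with $\widetilde w=(BA)(AB)^2(BA)^2(AB)$ for all $A,B$.) *)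

From Stdlib Require Import Reals List Arith.
Import ListNotations.
Open Scope R_scope.

Inductive A3 : Type := a1 | a2 | a3.

Definition rk (a : A3) : nat := match a with a1 => 1 | a2 => 2 | a3 => 3 end%nat.
Definition ltA (a b : A3) : Prop := (rk a < rk b)%nat.
Definition leA (a b : A3) : Prop := (rk a <= rk b)%nat.

Inductive knu : list A3 -> list A3 -> Prop :=
| knu_refl w : knu w w
| knu_sym w w' : knu w w' -> knu w' w
| knu_trans w1 w2 w3 : knu w1 w2 -> knu w2 w3 -> knu w1 w3
| knu_K1 (p q : list A3) (x y z : A3) :
    leA x y -> ltA y z -> knu (p ++ [x; z; y] ++ q) (p ++ [z; x; y] ++ q)
| knu_K2 (p q : list A3) (x y z : A3) :
    ltA x y -> leA y z -> knu (p ++ [y; x; z] ++ q) (p ++ [y; z; x] ++ q).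

(** * Tropical semiring T = R ∪ {-oo} (None = -oo), max-plus *)
Definition trop := option R.
Definition tmax (a b : trop) : trop :=
  match a, b with
  | Some x, Some y => Some (Rmax x y)
  | None, _ => b
  | _, None => a
  end.
Definition tmul (a b : trop) : trop :=
  match a, b with
  | Some x, Some y => Some (x + y)
  | _, _ => None
  end.

(** 3x3 tropical matrices, indices 0,1,2 (entries outside are irrelevant). *)
Definition mat := nat -> nat -> trop.
Definition mmul (X Y : mat) : mat := fun i j =>
  tmax (tmax (tmul (X i 0%nat) (Y 0%nat j)) (tmul (X i 1%nat) (Y 1%nat j)))
       (tmul (X i 2%nat) (Y 2%nat j)).
Definition upper (X : mat) : Prop :=
  forall i j : nat, (i < 3)%nat -> (j < 3)%nat -> (j < i)%nat -> X i j = None.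
Definition meq (X Y : mat) : Prop :=
  forall i j : nat, (i < 3)%nat -> (j < 3)%nat -> X i j = Y i j.

Definition word := list nat.

Definition meval (phi : nat -> mat) (w : word) : mat :=
  match w with
  | [] => fun _ _ => None (* unused: identities are between nonempty words *)
  | x :: w' => fold_left (fun M y => mmul M (phi y)) w' (phi x)
  end.

Definition TMat3_satisfies (u v : word) : Prop :=
  forall phi : nat -> mat, (forall x, upper (phi x)) ->
    meq (meval phi u) (meval phi v).

(** P_3 satisfies u = v: every assignment of elements of P_3 (represented by
    words over A3) to variables gives Knuth-congruent values *)
Definition P3_satisfies (u v : word) : Prop :=
  forall phi : nat -> list A3,
    knu (concat (map phi u)) (concat (map phi v)).

(* Two maps rho1, rho2 from A3 to 3x3 upper triangular max-plus matrices
   with entries in nat respect the Knuth relations, hence define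
   representations of P_3.  By Schensted insertion every word is Knuth
   equivalent to the reading word of a semistandard tableau, and the
   tableau can be read off its images: rho1 gives the content, the length of
   the first row and the number of its entries at most 2, and the (0,2)
   entry of rho2 the total length of the first two rows.  So rho1 x rho2 is
   faithful and P_3 inherits every identity of TMat_3(T).

   For the particular identity, x = uv and y = vu have images with the same
   diagonal.  For such X and Y the entries of W X W and W Y W, where
   W = Y X^2 Y^2 X, are max-plus polynomials in nine variables, and every
   monomial on either side is a convex combination of monomials on the other
   side; this is verified by computation. *)

From Stdlib Require Import Reals List Arith Bool Lia.
Import ListNotations.
Open Scope nat_scope.
Open Scope bool_scope.

Record ut (T : Type) : Type :=
  UT { u00 : T; u01 : T; u02 : T; u11 : T; u12 : T; u22 : T }.
Arguments UT {T}.
Arguments u00 {T}. Arguments u01 {T}. Arguments u02 {T}.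
Arguments u11 {T}. Arguments u12 {T}. Arguments u22 {T}.

Definition ut_mul {T : Type} (add mul : T -> T -> T) (A B : ut T) : ut T :=
  UT (mul (u00 A) (u00 B))
     (add (mul (u00 A) (u01 B)) (mul (u01 A) (u11 B)))
     (add (add (mul (u00 A) (u02 B)) (mul (u01 A) (u12 B))) (mul (u02 A) (u22 B)))
     (mul (u11 A) (u11 B))
     (add (mul (u11 A) (u12 B)) (mul (u12 A) (u22 B)))
     (mul (u22 A) (u22 B)).

Definition ut_map {S T : Type} (f : S -> T) (A : ut S) : ut T :=
  UT (f (u00 A)) (f (u01 A)) (f (u02 A)) (f (u11 A)) (f (u12 A)) (f (u22 A)).

Lemma ut_eq {T : Type} (A B : ut T) :
  u00 A = u00 B -> u01 A = u01 B -> u02 A = u02 B ->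
  u11 A = u11 B -> u12 A = u12 B -> u22 A = u22 B -> A = B.
Proof. destruct A, B; cbn; intros; subst; reflexivity. Qed.

Notation nmat := (ut nat).

Definition nmul : nmat -> nmat -> nmat := ut_mul Nat.max Nat.add.
Definition nzero : nmat := UT 0 0 0 0 0 0.
Definition nprod (l : list nmat) : nmat :=
  match l with [] => nzero | M :: l' => fold_left nmul l' M end.

Definition nmonotone (A : nmat) : Prop :=
  u00 A <= u01 A <= u02 A /\ u11 A <= u01 A /\
  u11 A <= u12 A <= u02 A /\ u22 A <= u12 A.

Lemma nmul_assoc A B C : nmul A (nmul B C) = nmul (nmul A B) C.
Proof. destruct A, B, C; apply ut_eq; cbn; lia. Qed.

Lemma nmul_monotone A B : nmonotone A -> nmonotone B -> nmonotone (nmul A B).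
Proof. destruct A, B; unfold nmonotone; cbn; lia. Qed.

Lemma nzero_monotone : nmonotone nzero.
Proof. unfold nmonotone; cbn; lia. Qed.

(* [nzero] is not the tropical identity (whose off-diagonal entries are
   -oo), but it acts as one on monotone matrices. *)
Lemma nmul_zero_l A : nmonotone A -> nmul nzero A = A.
Proof. destruct A; unfold nmonotone; intros; apply ut_eq; cbn in *; lia. Qed.

Lemma nmul_zero_r A : nmonotone A -> nmul A nzero = A.
Proof. destruct A; unfold nmonotone; intros; apply ut_eq; cbn in *; lia. Qed.

Lemma nprod_fold_right l :
  Forall nmonotone l -> nprod l = fold_right nmul nzero l.
Proof.
  destruct l as [|M l]; [reflexivity|]; cbn.
  intros Hl; inversion_clear Hl as [|? ? HM Hl'].
  revert M HM; induction Hl' as [|N l HN Hl IH]; intros M HM; cbn.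
  - symmetry; apply nmul_zero_r, HM.
  - rewrite IH by (apply nmul_monotone; assumption).
    symmetry; apply nmul_assoc.
Qed.

Fixpoint rep (g : A3 -> nmat) (w : list A3) : nmat :=
  match w with [] => nzero | a :: w' => nmul (g a) (rep g w') end.

Definition knuth_rep (g : A3 -> nmat) : Prop :=
  (forall a, nmonotone (g a)) /\
  (forall x y z, leA x y -> ltA y z -> rep g [x; z; y] = rep g [z; x; y]) /\
  (forall x y z, ltA x y -> leA y z -> rep g [y; x; z] = rep g [y; z; x]).

Section KnuthRep.

Variable g : A3 -> nmat.
Hypothesis Hg : knuth_rep g.

Lemma rep_monotone w : nmonotone (rep g w).
Proof.
  induction w as [|a w IH]; cbn; [apply nzero_monotone|].
  apply nmul_monotone; [apply Hg | exact IH].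
Qed.

Lemma rep_app w1 w2 : rep g (w1 ++ w2) = nmul (rep g w1) (rep g w2).
Proof.
  induction w1 as [|a w1 IH]; cbn.
  - symmetry; apply nmul_zero_l, rep_monotone.
  - rewrite IH; apply nmul_assoc.
Qed.

Lemma rep_knu w w' : knu w w' -> rep g w = rep g w'.
Proof.
  destruct Hg as (_ & HK1 & HK2).
  induction 1; try congruence; rewrite !rep_app; f_equal; f_equal; auto.
Qed.

Lemma rep_concat ws : rep g (concat ws) = nprod (map (rep g) ws).
Proof.
  rewrite nprod_fold_right.
  - induction ws as [|w ws IH]; cbn; [reflexivity|].
    rewrite rep_app, IH; reflexivity.
  - apply Forall_forall; intros M HM; apply in_map_iff in HM as (w & <- & _).
    apply rep_monotone.
Qed.

End KnuthRep.

Definition rho1 (a : A3) : nmat :=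
  match a with
  | a1 => UT 1 1 1 0 0 0
  | a2 => UT 0 1 1 1 1 0
  | a3 => UT 0 0 1 0 1 1
  end.

Definition rho2 (a : A3) : nmat :=
  match a with
  | a1 => UT 1 1 1 1 1 0
  | a2 => UT 1 1 1 0 1 1
  | a3 => UT 0 1 1 1 1 1
  end.

Lemma knuth_rep_rho1 : knuth_rep rho1.
Proof.
  split; [|split]; [intros []; unfold nmonotone; cbn; lia|..];
    intros [] [] [] H1 H2; unfold leA, ltA, rk in *; cbn in *; try lia; reflexivity.
Qed.

Lemma knuth_rep_rho2 : knuth_rep rho2.
Proof.
  split; [|split]; [intros []; unfold nmonotone; cbn; lia|..];
    intros [] [] [] H1 H2; unfold leA, ltA, rk in *; cbn in *; try lia; reflexivity.
Qed.

Lemma knu_eq w w' : w = w' -> knu w w'.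
Proof. intros ->; apply knu_refl. Qed.

Lemma knu_ctx p w w' q : knu w w' -> knu (p ++ w ++ q) (p ++ w' ++ q).
Proof.
  assert (Hassoc : forall (p0 : list A3) u q0,
             p ++ (p0 ++ u ++ q0) ++ q = (p ++ p0) ++ u ++ (q0 ++ q))
    by (intros; rewrite <- !app_assoc; reflexivity).
  induction 1.
  - apply knu_refl.
  - apply knu_sym; assumption.
  - eapply knu_trans; eassumption.
  - rewrite !Hassoc; apply knu_K1; assumption.
  - rewrite !Hassoc; apply knu_K2; assumption.
Qed.

Lemma knu_ctx_eq p w w' q v v' :
  v = p ++ w ++ q -> v' = p ++ w' ++ q -> knu w w' -> knu v v'.
Proof. intros -> ->; apply knu_ctx. Qed.

Lemma repeat_cons_comm (x : A3) k l : repeat x k ++ x :: l = x :: repeat x k ++ l.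
Proof. induction k as [|k IH]; cbn; congruence. Qed.

Ltac list_norm :=
  cbn; repeat (rewrite <- !app_assoc; cbn);
  repeat (rewrite repeat_cons_comm; cbn); try rewrite app_nil_r; reflexivity.

Lemma knu_K1_repeat x z k y :
  leA x y -> ltA y z -> knu (repeat x k ++ [z; y]) (z :: repeat x k ++ [y]).
Proof.
  revert y; induction k as [|k IH]; intros y Hxy Hyz; [apply knu_refl|].
  eapply knu_trans.
  - apply (knu_ctx_eq (repeat x k) [x; z; y] [z; x; y] []); [list_norm | reflexivity |].
    apply (knu_K1 [] []); assumption.
  - apply (knu_ctx_eq [] (repeat x k ++ [z; x]) (z :: repeat x k ++ [x]) [y]);
      [list_norm | list_norm |].
    apply IH; unfold leA, ltA in *; lia.
Qed.

Lemma knu_K2_repeat x z k y :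
  ltA x y -> leA y z -> knu (y :: x :: repeat z k) (y :: repeat z k ++ [x]).
Proof.
  revert y; induction k as [|k IH]; intros y Hxy Hyz; [apply knu_refl|].
  eapply knu_trans.
  - apply (knu_ctx_eq [] [y; x; z] [y; z; x] (repeat z k)); [list_norm | reflexivity |].
    apply (knu_K2 [] []); assumption.
  - apply (knu_ctx_eq [y] (z :: x :: repeat z k) (z :: repeat z k ++ [x]) []);
      [list_norm | list_norm |].
    apply IH; unfold leA, ltA in *; lia.
Qed.

Notation r1 := (repeat a1).
Notation r2 := (repeat a2).
Notation r3 := (repeat a3).

Lemma lt12 : ltA a1 a2. Proof. unfold ltA; cbn; lia. Qed.
Lemma lt13 : ltA a1 a3. Proof. unfold ltA; cbn; lia. Qed.
Lemma lt23 : ltA a2 a3. Proof. unfold ltA; cbn; lia. Qed.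
Lemma leA_refl x : leA x x. Proof. unfold leA; lia. Qed.
Lemma le12 : leA a1 a2. Proof. unfold leA; cbn; lia. Qed.
Lemma le23 : leA a2 a3. Proof. unfold leA; cbn; lia. Qed.
#[local] Hint Resolve lt12 lt13 lt23 leA_refl le12 le23 : core.

(* Row insertion: a weakly increasing row followed by a letter [x] is Knuth
   equivalent to the bumped letter (the leftmost one greater than [x])
   followed by the row in which [x] has replaced it. *)
Lemma knu_bump_3_by_2 i j k :
  knu (r1 i ++ r2 j ++ r3 (S k) ++ [a2]) (a3 :: r1 i ++ r2 (S j) ++ r3 k).
Proof.
  eapply knu_trans.
  { apply (knu_ctx_eq (r1 i ++ r2 j) (a3 :: r3 k ++ [a2]) (a3 :: a2 :: r3 k) []);
      [list_norm | list_norm |].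
    apply knu_sym, knu_K2_repeat; auto. }
  eapply knu_trans.
  { apply (knu_ctx_eq (r1 i) (r2 j ++ [a3; a2]) (a3 :: r2 j ++ [a2]) (r3 k));
      [list_norm | list_norm |].
    apply knu_K1_repeat; auto. }
  apply (knu_ctx_eq [] (r1 i ++ [a3; a2]) (a3 :: r1 i ++ [a2]) (r2 j ++ r3 k));
    [list_norm | list_norm |].
  apply knu_K1_repeat; auto.
Qed.

Lemma knu_bump_3_by_1 i k :
  knu (r1 i ++ r3 (S k) ++ [a1]) (a3 :: r1 (S i) ++ r3 k).
Proof.
  eapply knu_trans.
  { apply (knu_ctx_eq (r1 i) (a3 :: r3 k ++ [a1]) (a3 :: a1 :: r3 k) []);
      [list_norm | list_norm |].
    apply knu_sym, knu_K2_repeat; auto. }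
  apply (knu_ctx_eq [] (r1 i ++ [a3; a1]) (a3 :: r1 i ++ [a1]) (r3 k));
    [list_norm | list_norm |].
  apply knu_K1_repeat; auto.
Qed.

Lemma knu_bump_2_by_1 i j k :
  knu (r1 i ++ r2 (S j) ++ r3 k ++ [a1]) (a2 :: r1 (S i) ++ r2 j ++ r3 k).
Proof.
  eapply knu_trans.
  { apply (knu_ctx_eq (r1 i ++ r2 j) (a2 :: r3 k ++ [a1]) (a2 :: a1 :: r3 k) []);
      [list_norm | list_norm |].
    apply knu_sym, knu_K2_repeat; auto. }
  eapply knu_trans.
  { apply (knu_ctx_eq (r1 i) (a2 :: r2 j ++ [a1]) (a2 :: a1 :: r2 j) (r3 k));
      [list_norm | list_norm |].
    apply knu_sym, knu_K2_repeat; auto. }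
  apply (knu_ctx_eq [] (r1 i ++ [a2; a1]) (a2 :: r1 i ++ [a1]) (r2 j ++ r3 k));
    [list_norm | list_norm |].
  apply knu_K1_repeat; auto.
Qed.

(* Reading word (bottom row first) of the semistandard tableau with rows
   1^a 2^b 3^c, 2^d 3^e and 3^f. *)
Definition tableau (a b c d e f : nat) : list A3 :=
  r3 f ++ r2 d ++ r3 e ++ r1 a ++ r2 b ++ r3 c.

Definition is_tableau (a b c d e f : nat) : Prop :=
  d <= a /\ d + e <= a + b /\ f <= d.

Definition knu_tableau (w : list A3) : Prop :=
  exists a b c d e f, is_tableau a b c d e f /\ knu w (tableau a b c d e f).

Lemma knu_tableau_intro w a b c d e f :
  is_tableau a b c d e f -> knu w (tableau a b c d e f) -> knu_tableau w.
Proof. intros; do 6 eexists; eauto. Qed.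

Ltac new_tableau a b c d e f :=
  apply (knu_tableau_intro _ a b c d e f); [unfold is_tableau; lia | unfold tableau].

Lemma knu_tableau_snoc_a1 a b c d e f :
  is_tableau a b c d e f -> knu_tableau (tableau a b c d e f ++ [a1]).
Proof.
  unfold is_tableau; intros T.
  destruct b as [|b].
  - destruct c as [|c].
    + new_tableau (S a) 0 0 d e f.
      apply knu_eq; unfold tableau; list_norm.
    + new_tableau (S a) 0 c d (S e) f.
      apply (knu_ctx_eq (r3 f ++ r2 d ++ r3 e) (r1 a ++ r3 (S c) ++ [a1])
               (a3 :: r1 (S a) ++ r3 c) []);
        [unfold tableau; list_norm | list_norm | apply knu_bump_3_by_1].
  - assert (Hrow1 : knu (tableau a (S b) c d e f ++ [a1])
                        (r3 f ++ r2 d ++ r3 e ++ a2 :: r1 (S a) ++ r2 b ++ r3 c))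
      by (apply (knu_ctx_eq (r3 f ++ r2 d ++ r3 e) (r1 a ++ r2 (S b) ++ r3 c ++ [a1])
                            (a2 :: r1 (S a) ++ r2 b ++ r3 c) []);
          [unfold tableau; list_norm | list_norm | apply knu_bump_2_by_1]).
    destruct e as [|e].
    + new_tableau (S a) b c (S d) 0 f.
      eapply knu_trans; [exact Hrow1|]; apply knu_eq; list_norm.
    + new_tableau (S a) b c (S d) e (S f).
      eapply knu_trans; [exact Hrow1|].
      apply (knu_ctx_eq (r3 f) (r1 0 ++ r2 d ++ r3 (S e) ++ [a2])
               (a3 :: r1 0 ++ r2 (S d) ++ r3 e) (r1 (S a) ++ r2 b ++ r3 c));
        [list_norm | list_norm | apply knu_bump_3_by_2].
Qed.

Lemma knu_tableau_snoc a b c d e f x :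
  is_tableau a b c d e f -> knu_tableau (tableau a b c d e f ++ [x]).
Proof.
  intros T; destruct x; [apply knu_tableau_snoc_a1, T|..]; unfold is_tableau in T.
  - destruct c as [|c].
    + new_tableau a (S b) 0 d e f.
      apply knu_eq; unfold tableau; list_norm.
    + new_tableau a (S b) c d (S e) f.
      apply (knu_ctx_eq (r3 f ++ r2 d ++ r3 e) (r1 a ++ r2 b ++ r3 (S c) ++ [a2])
               (a3 :: r1 a ++ r2 (S b) ++ r3 c) []);
        [unfold tableau; list_norm | list_norm | apply knu_bump_3_by_2].
  - new_tableau a b (S c) d e f.
    apply knu_eq; unfold tableau; list_norm.
Qed.

Lemma knu_tableau_all w : knu_tableau w.
Proof.
  induction w as [|x w IH] using rev_ind.
  - apply (knu_tableau_intro _ 0 0 0 0 0 0); [unfold is_tableau; lia | apply knu_refl].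
  - destruct IH as (a & b & c & d & e & f & T & K).
    destruct (knu_tableau_snoc a b c d e f x T) as (a' & b' & c' & d' & e' & f' & T' & K').
    apply (knu_tableau_intro _ a' b' c' d' e' f' T').
    eapply knu_trans; [|exact K'].
    apply (knu_ctx_eq [] w (tableau a b c d e f) [x]); auto.
Qed.

Lemma rep_rho1_repeat k :
  rep rho1 (r1 k) = UT k k k 0 0 0 /\ rep rho1 (r2 k) = UT 0 k k k k 0 /\
  rep rho1 (r3 k) = UT 0 0 k 0 k k.
Proof.
  induction k as [|k (H1 & H2 & H3)]; [repeat split|]; cbn.
  rewrite H1, H2, H3; repeat split; apply ut_eq; cbn; lia.
Qed.

Lemma rep_rho2_repeat k :
  rep rho2 (r1 k) = UT k k k k k 0 /\ rep rho2 (r2 k) = UT k k k 0 k k /\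
  rep rho2 (r3 k) = UT 0 k k k k k.
Proof.
  induction k as [|k (H1 & H2 & H3)]; [repeat split|]; cbn.
  rewrite H1, H2, H3; repeat split; apply ut_eq; cbn; lia.
Qed.

Ltac nmul_step X Y Z := replace (nmul X Y) with Z by (apply ut_eq; cbn; lia).

Lemma rep_rho1_tableau a b c d e f : is_tableau a b c d e f ->
  rep rho1 (tableau a b c d e f) =
  UT a (a + b) (a + b + c) (b + d) (c + d + Nat.max b e) (c + e + f).
Proof.
  unfold is_tableau, tableau; intros T.
  rewrite !(rep_app rho1 knuth_rep_rho1).
  destruct (rep_rho1_repeat a) as (-> & _ & _), (rep_rho1_repeat b) as (_ & -> & _),
    (rep_rho1_repeat c) as (_ & _ & ->), (rep_rho1_repeat d) as (_ & -> & _),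
    (rep_rho1_repeat e) as (_ & _ & ->), (rep_rho1_repeat f) as (_ & _ & ->).
  nmul_step (UT 0 b b b b 0) (UT 0 0 c 0 c c) (UT 0 b (b + c) b (b + c) c).
  nmul_step (UT a a a 0 0 0) (UT 0 b (b + c) b (b + c) c)
    (UT a (a + b) (a + b + c) b (b + c) c).
  nmul_step (UT 0 0 e 0 e e) (UT a (a + b) (a + b + c) b (b + c) c)
    (UT a (a + b) (a + b + c) b (c + Nat.max b e) (c + e)).
  nmul_step (UT 0 d d d d 0) (UT a (a + b) (a + b + c) b (c + Nat.max b e) (c + e))
    (UT a (a + b) (a + b + c) (b + d) (c + d + Nat.max b e) (c + e)).
  apply ut_eq; cbn; lia.
Qed.

Lemma rep_rho2_tableau a b c d e f : is_tableau a b c d e f ->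
  u02 (rep rho2 (tableau a b c d e f)) = a + b + c + d + e.
Proof.
  unfold is_tableau, tableau; intros T.
  rewrite !(rep_app rho2 knuth_rep_rho2).
  destruct (rep_rho2_repeat a) as (-> & _ & _), (rep_rho2_repeat b) as (_ & -> & _),
    (rep_rho2_repeat c) as (_ & _ & ->), (rep_rho2_repeat d) as (_ & -> & _),
    (rep_rho2_repeat e) as (_ & _ & ->), (rep_rho2_repeat f) as (_ & _ & ->).
  nmul_step (UT b b b 0 b b) (UT 0 c c c c c) (UT b (b + c) (b + c) c (b + c) (b + c)).
  nmul_step (UT a a a a a 0) (UT b (b + c) (b + c) c (b + c) (b + c))
    (UT (a + b) (a + b + c) (a + b + c) (a + c) (a + b + c) (b + c)).
  nmul_step (UT 0 e e e e e) (UT (a + b) (a + b + c) (a + b + c) (a + c) (a + b + c) (b + c))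
    (UT (a + b) (a + c + Nat.max b e) (a + b + c + e) (a + c + e) (a + b + c + e) (b + c + e)).
  nmul_step (UT d d d 0 d d)
    (UT (a + b) (a + c + Nat.max b e) (a + b + c + e) (a + c + e) (a + b + c + e) (b + c + e))
    (UT (a + b + d) (a + c + d + Nat.max b e) (a + b + c + d + e) (a + c + e)
        (a + b + c + e) (b + c + d + e)).
  cbn; lia.
Qed.

Lemma tableau_rep_inj a b c d e f a' b' c' d' e' f' :
  is_tableau a b c d e f -> is_tableau a' b' c' d' e' f' ->
  rep rho1 (tableau a b c d e f) = rep rho1 (tableau a' b' c' d' e' f') ->
  rep rho2 (tableau a b c d e f) = rep rho2 (tableau a' b' c' d' e' f') ->
  tableau a b c d e f = tableau a' b' c' d' e' f'.
Proof.
  intros T T' E1 E2.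
  rewrite (rep_rho1_tableau _ _ _ _ _ _ T), (rep_rho1_tableau _ _ _ _ _ _ T') in E1.
  apply (f_equal u02) in E2.
  rewrite (rep_rho2_tableau _ _ _ _ _ _ T), (rep_rho2_tableau _ _ _ _ _ _ T') in E2.
  injection E1; intros.
  replace a' with a by lia; replace b' with b by lia; replace c' with c by lia;
    replace d' with d by lia; replace e' with e by lia; replace f' with f by lia.
  reflexivity.
Qed.

Theorem knu_iff_rep w w' :
  knu w w' <-> rep rho1 w = rep rho1 w' /\ rep rho2 w = rep rho2 w'.
Proof.
  split.
  - intros K; split; apply rep_knu; auto using knuth_rep_rho1, knuth_rep_rho2.
  - intros [E1 E2].
    destruct (knu_tableau_all w) as (a & b & c & d & e & f & T & K).
    destruct (knu_tableau_all w') as (a' & b' & c' & d' & e' & f' & T' & K').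
    rewrite (rep_knu _ knuth_rep_rho1 _ _ K), (rep_knu _ knuth_rep_rho1 _ _ K') in E1.
    rewrite (rep_knu _ knuth_rep_rho2 _ _ K), (rep_knu _ knuth_rep_rho2 _ _ K') in E2.
    eapply knu_trans; [exact K|].
    rewrite (tableau_rep_inj _ _ _ _ _ _ _ _ _ _ _ _ T T' E1 E2).
    apply knu_sym; exact K'.
Qed.

Definition to_mat (A : nmat) : mat := fun i j =>
  match i, j with
  | 0, 0 => Some (INR (u00 A)) | 0, 1 => Some (INR (u01 A)) | 0, 2 => Some (INR (u02 A))
  | 1, 1 => Some (INR (u11 A)) | 1, 2 => Some (INR (u12 A))
  | 2, 2 => Some (INR (u22 A))
  | _, _ => None
  end.

Lemma INR_max m n : INR (Nat.max m n) = Rmax (INR m) (INR n).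
Proof.
  destruct (Nat.le_ge_cases m n) as [H | H].
  - rewrite Nat.max_r, Rmax_right by (try apply le_INR; exact H); reflexivity.
  - rewrite Nat.max_l, Rmax_left by (try apply le_INR; exact H); reflexivity.
Qed.

Lemma to_mat_upper A : upper (to_mat A).
Proof.
  intros i j Hi Hj Hji.
  destruct i as [|[|[|i]]]; destruct j as [|[|[|j]]]; cbn; reflexivity || lia.
Qed.

Lemma to_mat_mul A B : meq (mmul (to_mat A) (to_mat B)) (to_mat (nmul A B)).
Proof.
  intros i j Hi Hj.
  destruct i as [|[|[|i]]]; try lia; destruct j as [|[|[|j]]]; try lia;
    unfold mmul, to_mat; cbn; rewrite ?INR_max, ?plus_INR; reflexivity.
Qed.

Lemma to_mat_inj A B : meq (to_mat A) (to_mat B) -> A = B.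
Proof.
  intros H.
  assert (E : forall m n, Some (INR m) = Some (INR n) -> m = n)
    by (intros m n Hmn; injection Hmn; apply INR_eq).
  apply ut_eq; apply E;
    [apply (H 0 0) | apply (H 0 1) | apply (H 0 2) | apply (H 1 1) | apply (H 1 2)
    | apply (H 2 2)]; lia.
Qed.

Lemma meq_sym X Y : meq X Y -> meq Y X.
Proof. intros H i j Hi Hj; symmetry; apply H; assumption. Qed.

Lemma meq_trans X Y Z : meq X Y -> meq Y Z -> meq X Z.
Proof. intros H1 H2 i j Hi Hj; rewrite H1, H2; trivial. Qed.

Lemma mmul_meq X X' Y Y' : meq X X' -> meq Y Y' -> meq (mmul X Y) (mmul X' Y').
Proof.
  intros HX HY i j Hi Hj; unfold mmul.
  rewrite (HX i 0), (HX i 1), (HX i 2), (HY 0 j), (HY 1 j), (HY 2 j); trivial; lia.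
Qed.

Lemma meval_to_mat (Phi : nat -> nmat) u :
  u <> [] -> meq (meval (fun x => to_mat (Phi x)) u) (to_mat (nprod (map Phi u))).
Proof.
  destruct u as [|x u]; [contradiction|]; intros _; cbn.
  assert (Hfold : forall N M, meq N (to_mat M) ->
             meq (fold_left (fun N y => mmul N (to_mat (Phi y))) u N)
                 (to_mat (fold_left nmul (map Phi u) M))).
  { induction u as [|y u IH]; intros N M HNM; cbn; [exact HNM|].
    apply IH; eapply meq_trans; [|apply to_mat_mul].
    apply mmul_meq; [exact HNM | intros i j _ _; reflexivity]. }
  apply Hfold; intros i j _ _; reflexivity.
Qed.

Theorem P3_satisfies_of_TMat3 u v :
  u <> [] -> v <> [] -> TMat3_satisfies u v -> P3_satisfies u v.
Proof.
  intros Hu Hv HT phi; apply knu_iff_rep.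
  assert (E : forall g, knuth_rep g ->
             rep g (concat (map phi u)) = rep g (concat (map phi v))).
  { intros g Hg; rewrite !(rep_concat g Hg), !map_map; apply to_mat_inj.
    eapply meq_trans; [apply meq_sym, meval_to_mat, Hu|].
    eapply meq_trans; [apply HT; intros; apply to_mat_upper|].
    apply meval_to_mat, Hv. }
  split; apply E; [apply knuth_rep_rho1 | apply knuth_rep_rho2].
Qed.

Definition monomial := list nat.

Fixpoint mon_eval (v : list nat) (m : monomial) : nat :=
  match v, m with
  | x :: v', c :: m' => c * x + mon_eval v' m'
  | _, _ => 0
  end.

Fixpoint mon_add (m n : monomial) : monomial :=
  match m, n with
  | [], _ => n
  | _, [] => m
  | c :: m', d :: n' => (c + d) :: mon_add m' n'
  end.

Definition mon_scale (k : nat) (m : monomial) : monomial := map (Nat.mul k) m.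

Lemma mon_eval_add v m n : mon_eval v (mon_add m n) = mon_eval v m + mon_eval v n.
Proof.
  revert m n; induction v as [|x v IH]; intros [|c m] [|d n]; cbn; try lia.
  rewrite IH; lia.
Qed.

Lemma mon_eval_scale v k m : mon_eval v (mon_scale k m) = k * mon_eval v m.
Proof.
  revert m; induction v as [|x v IH]; intros [|c m]; cbn; try lia.
  fold (mon_scale k m); rewrite IH; lia.
Qed.

Definition tpoly := list monomial.

Fixpoint poly_eval (v : list nat) (p : tpoly) : nat :=
  match p with [] => 0 | m :: p' => Nat.max (mon_eval v m) (poly_eval v p') end.

Definition poly_mul (p q : tpoly) : tpoly := flat_map (fun m => map (mon_add m) q) p.

Lemma poly_eval_app v p q :
  poly_eval v (p ++ q) = Nat.max (poly_eval v p) (poly_eval v q).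
Proof. induction p as [|m p IH]; cbn; [reflexivity|]; rewrite IH; lia. Qed.

Lemma poly_eval_map_add v m q :
  q <> [] -> poly_eval v (map (mon_add m) q) = mon_eval v m + poly_eval v q.
Proof.
  induction q as [|n q IH]; intros Hq; [contradiction|].
  change (map (mon_add m) (n :: q)) with (mon_add m n :: map (mon_add m) q).
  cbn [poly_eval]; rewrite mon_eval_add.
  destruct q as [|n' q]; [cbn; lia|].
  rewrite IH by discriminate; lia.
Qed.

Lemma poly_eval_mul v p q :
  p <> [] -> q <> [] -> poly_eval v (poly_mul p q) = poly_eval v p + poly_eval v q.
Proof.
  intros Hp Hq.
  induction p as [|m [|m' p] IH]; [contradiction| |];
    change (poly_mul (m :: ?p) q) with (map (mon_add m) q ++ poly_mul p q);
    rewrite poly_eval_app, poly_eval_map_add by assumption.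
  - cbn; lia.
  - rewrite IH by discriminate; cbn; lia.
Qed.

Lemma mon_eval_le_poly v p m : In m p -> mon_eval v m <= poly_eval v p.
Proof.
  induction p as [|n p IH]; cbn; [contradiction|].
  intros [-> | H]; [|specialize (IH H)]; lia.
Qed.

Fixpoint supp_le (m n : monomial) : bool :=
  match m, n with
  | c :: m', d :: n' => (Nat.eqb c 0 || Nat.ltb 0 d) && supp_le m' n'
  | _, _ => true
  end.

Definition mon_eqb (m n : monomial) : bool :=
  if list_eq_dec Nat.eq_dec m n then true else false.

(* Under the call-by-value evaluation of [vm_compute], [existsb] evaluates
   its recursive call before [orb] can short-circuit, so every search would
   be exhaustive; [anyb] stops at the first success. *)
Fixpoint anyb {A : Type} (P : A -> bool) (l : list A) : bool :=
  match l with [] => false | a :: l' => if P a then true else anyb P l' end.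

Lemma anyb_exists {A : Type} (P : A -> bool) l :
  anyb P l = true -> exists a, In a l /\ P a = true.
Proof.
  induction l as [|a l IH]; cbn; [discriminate|].
  destruct (P a) eqn:Ha; intros H; [eauto|].
  destruct (IH H) as (b & Hb & HPb); eauto.
Qed.

(* Weights below 4 are enough for the identity at hand. *)
Definition convex3 (f g h k : monomial) : bool :=
  anyb (fun w1 => anyb (fun w2 => anyb (fun w3 =>
    Nat.ltb 0 (w1 + w2 + w3) &&
    mon_eqb (mon_add (mon_scale w1 g) (mon_add (mon_scale w2 h) (mon_scale w3 k)))
            (mon_scale (w1 + w2 + w3) f))
    (seq 0 4)) (seq 0 4)) (seq 0 4).

Lemma convex3_sound v f g h k : convex3 f g h k = true ->
  mon_eval v f <= Nat.max (mon_eval v g) (Nat.max (mon_eval v h) (mon_eval v k)).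
Proof.
  unfold convex3; intros H.
  apply anyb_exists in H as (w1 & _ & H).
  apply anyb_exists in H as (w2 & _ & H).
  apply anyb_exists in H as (w3 & _ & H).
  apply andb_true_iff in H as [Hpos Heq].
  apply Nat.ltb_lt in Hpos.
  unfold mon_eqb in Heq; destruct list_eq_dec as [E|]; [|discriminate].
  apply (f_equal (mon_eval v)) in E; rewrite !mon_eval_add, !mon_eval_scale in E.
  set (M := Nat.max _ _).
  assert (Hg : w1 * mon_eval v g <= w1 * M) by (apply Nat.mul_le_mono_l; lia).
  assert (Hh : w2 * mon_eval v h <= w2 * M) by (apply Nat.mul_le_mono_l; lia).
  assert (Hk : w3 * mon_eval v k <= w3 * M) by (apply Nat.mul_le_mono_l; lia).
  apply (Nat.mul_le_mono_pos_l _ _ (w1 + w2 + w3)); [exact Hpos | nia].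
Qed.

(* A monomial of [q] with positive weight in a convex combination equal to
   [f] has its support inside that of [f]; only those are searched. *)
Definition dominated (q : tpoly) (f : monomial) : bool :=
  let q' := filter (fun g => supp_le g f) q in
  anyb (fun g => anyb (fun h => anyb (convex3 f g h) q') q') q'.

Definition poly_le (p q : tpoly) : bool := forallb (dominated q) p.

Lemma dominated_sound v q f : dominated q f = true -> mon_eval v f <= poly_eval v q.
Proof.
  unfold dominated; intros H.
  apply anyb_exists in H as (g & Hg & H).
  apply anyb_exists in H as (h & Hh & H).
  apply anyb_exists in H as (k & Hk & H).
  apply filter_In in Hg as [Hg _], Hh as [Hh _], Hk as [Hk _].
  pose proof (convex3_sound v _ _ _ _ H).
  pose proof (mon_eval_le_poly v _ _ Hg).
  pose proof (mon_eval_le_poly v _ _ Hh).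
  pose proof (mon_eval_le_poly v _ _ Hk).
  lia.
Qed.

Lemma poly_le_sound v p q : poly_le p q = true -> poly_eval v p <= poly_eval v q.
Proof.
  unfold poly_le; intros H.
  induction p as [|f p IH]; cbn in *; [lia|].
  apply andb_true_iff in H as [Hf Hp].
  pose proof (dominated_sound v _ _ Hf); specialize (IH Hp); lia.
Qed.

Definition smul : ut tpoly -> ut tpoly -> ut tpoly := ut_mul (@app monomial) poly_mul.

Definition ut_eval (v : list nat) (A : ut tpoly) : nmat := ut_map (poly_eval v) A.

Definition ut_nonempty (A : ut tpoly) : Prop :=
  u00 A <> [] /\ u01 A <> [] /\ u02 A <> [] /\ u11 A <> [] /\ u12 A <> [] /\ u22 A <> [].

Lemma poly_mul_nonempty p q : p <> [] -> q <> [] -> poly_mul p q <> [].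
Proof. destruct p, q; cbn; congruence. Qed.

Lemma app_nonempty (p q : tpoly) : p <> [] -> p ++ q <> [].
Proof. destruct p; cbn; congruence. Qed.

Lemma smul_nonempty A B : ut_nonempty A -> ut_nonempty B -> ut_nonempty (smul A B).
Proof.
  intros (? & ? & ? & ? & ? & ?) (? & ? & ? & ? & ? & ?); unfold ut_nonempty; cbn.
  repeat split; repeat apply app_nonempty; apply poly_mul_nonempty; assumption.
Qed.

Lemma ut_eval_smul v A B : ut_nonempty A -> ut_nonempty B ->
  ut_eval v (smul A B) = nmul (ut_eval v A) (ut_eval v B).
Proof.
  intros (? & ? & ? & ? & ? & ?) (? & ? & ? & ? & ? & ?).
  unfold ut_eval, ut_map, smul, nmul, ut_mul; cbn.
  rewrite !poly_eval_app, !poly_eval_mul by assumption; reflexivity.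
Qed.

Lemma ut_eval_fold v M l : ut_nonempty M -> Forall ut_nonempty l ->
  ut_eval v (fold_left smul l M) = fold_left nmul (map (ut_eval v) l) (ut_eval v M).
Proof.
  intros HM Hl; revert M HM; induction Hl as [|N l HN Hl IH]; intros M HM; cbn;
    [reflexivity|].
  rewrite IH by (apply smul_nonempty; assumption); rewrite ut_eval_smul by assumption.
  reflexivity.
Qed.

Definition ut_le (A B : ut tpoly) : bool :=
  poly_le (u00 A) (u00 B) && poly_le (u01 A) (u01 B) && poly_le (u02 A) (u02 B) &&
  poly_le (u11 A) (u11 B) && poly_le (u12 A) (u12 B) && poly_le (u22 A) (u22 B).

Lemma ut_eval_eq v A B : ut_le A B && ut_le B A = true -> ut_eval v A = ut_eval v B.
Proof.
  unfold ut_le; rewrite !andb_true_iff; intros (HAB & HBA).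
  repeat match goal with H : _ /\ _ |- _ => destruct H end.
  apply ut_eq; cbn; apply Nat.le_antisymm; apply poly_le_sound; assumption.
Qed.

Definition letter {T : Type} (X Y : T) (b : bool) : T := if b then X else Y.

(* Symbolic X and Y with a common diagonal; the nine coordinates of a
   monomial are the exponents of d0 d1 d2 x01 x02 x12 y01 y02 y12. *)
Definition var (k : nat) : monomial := map (fun i => if Nat.eqb i k then 1 else 0) (seq 0 9).
Definition sym_X : ut tpoly := UT [var 0] [var 3] [var 4] [var 1] [var 5] [var 2].
Definition sym_Y : ut tpoly := UT [var 0] [var 6] [var 7] [var 1] [var 8] [var 2].

Definition valuation (X Y : nmat) : list nat :=
  [u00 X; u11 X; u22 X; u01 X; u02 X; u12 X; u01 Y; u02 Y; u12 Y].

Definition same_diag (X Y : nmat) : Prop :=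
  u00 X = u00 Y /\ u11 X = u11 Y /\ u22 X = u22 Y.

Lemma ut_eval_letter X Y b : same_diag X Y ->
  ut_eval (valuation X Y) (letter sym_X sym_Y b) = letter X Y b.
Proof.
  destruct X, Y; intros (? & ? & ?); cbn in *; subst.
  destruct b; apply ut_eq; cbn; lia.
Qed.

Lemma letters_nonempty s : Forall ut_nonempty (map (letter sym_X sym_Y) s).
Proof.
  apply Forall_forall; intros M HM; apply in_map_iff in HM as ([] & <- & _);
    unfold ut_nonempty; cbn; repeat split; discriminate.
Qed.

Definition sprod (l : list (ut tpoly)) : ut tpoly :=
  match l with [] => UT [] [] [] [] [] [] | M :: l' => fold_left smul l' M end.

Lemma nprod_sym X Y s : same_diag X Y ->
  nprod (map (letter X Y) s) = ut_eval (valuation X Y) (sprod (map (letter sym_X sym_Y) s)).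
Proof.
  intros H; destruct s as [|b s]; [reflexivity|].
  pose proof (letters_nonempty (b :: s)) as Hs; inversion_clear Hs as [|? ? Hb Hl].
  cbn [map nprod sprod]; rewrite ut_eval_fold, map_map, ut_eval_letter by assumption.
  f_equal; apply map_ext; intros c; symmetry; apply ut_eval_letter, H.
Qed.

Definition wtilde : list bool := [false; true; true; false; false; true].

Lemma nprod_middle_swap X Y : same_diag X Y ->
  nprod (map (letter X Y) (wtilde ++ true :: wtilde)) =
  nprod (map (letter X Y) (wtilde ++ false :: wtilde)).
Proof.
  intros H; rewrite !nprod_sym by exact H.
  apply ut_eval_eq; vm_compute; reflexivity.
Qed.

Lemma same_diag_nmul_comm A B : same_diag (nmul A B) (nmul B A).
Proof. unfold same_diag; cbn; lia. Qed.

Lemma rep_middle_swap g U V : knuth_rep g ->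
  rep g (concat (map (letter (U ++ V) (V ++ U)) (wtilde ++ true :: wtilde))) =
  rep g (concat (map (letter (U ++ V) (V ++ U)) (wtilde ++ false :: wtilde))).
Proof.
  intros Hg; rewrite !(rep_concat g Hg), !map_map.
  rewrite !(map_ext (fun b => rep g (letter (U ++ V) (V ++ U) b))
                    (letter (rep g (U ++ V)) (rep g (V ++ U)))) by (intros []; reflexivity).
  rewrite !(rep_app g Hg).
  apply nprod_middle_swap, same_diag_nmul_comm.
Qed.

Lemma knu_middle_swap U V :
  knu (concat (map (letter (U ++ V) (V ++ U)) (wtilde ++ true :: wtilde)))
      (concat (map (letter (U ++ V) (V ++ U)) (wtilde ++ false :: wtilde))).
Proof.
  apply knu_iff_rep; split; apply rep_middle_swap;
    [apply knuth_rep_rho1 | apply knuth_rep_rho2].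
Qed.

Theorem mainTheorem16 :
  (forall u v : word, u <> [] -> v <> [] -> u <> v ->
     TMat3_satisfies u v -> P3_satisfies u v)
  /\
  (forall U V : list A3,
     let x := U ++ V in
     let y := V ++ U in
     let wt := y ++ x ++ x ++ y ++ y ++ x in
     knu (wt ++ x ++ wt) (wt ++ y ++ wt)).
Proof.
  split.
  - intros u v Hu Hv _; apply P3_satisfies_of_TMat3; assumption.
  - intros U V; cbv zeta.
    pose proof (knu_middle_swap U V) as K; cbn in K.
    rewrite !app_nil_r, <- !app_assoc in K; rewrite <- !app_assoc; exact K.
Qed.
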